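(* Let $P,Q\in\mathbb P_d$ and $R=\big((1-t)P+tQ\big)^{-1}$ for some $t\in[0,1]$. Then $\operatorname{F}_R(P,Q)=\operatorname{F}^{\mathrm M}(P,Q)$.
   Context: $\mathbb P_d$ is the set of $d\times d$ complex positive definite matrices; $A\#B:=A^{1/2}(A^{-1/2}BA^{-1/2})^{1/2}A^{1/2}$. The generalized fidelity is $\operatorname{F}_R(P,Q):=\operatorname{Tr}\big[\sqrt{R^{1/2}PR^{1/2}}\,R^{-1}\sqrt{R^{1/2}QR^{1/2}}\big]$, and the Matsumoto fidelity is $\operatorname{F}^{\mathrm M}(P,Q):=\operatorname{Tr}[P\#Q]$. *)

From Stdlib Require Import ClassicalEpsilon.
From mathcomp Require Import all_boot all_order all_algebra.
From mathcomp Require Import reals complex.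
Set Implicit Arguments. Unset Strict Implicit. Unset Printing Implicit Defensive.
Import GRing.Theory Num.Theory.
Local Open Scope ring_scope.

Section MatrixDefs.
Variables (R : realType) (d : nat).
Local Notation C := (R[i]).
Local Notation M := ('M[C]_d).

Definition adjmx (A : 'M[C]_(d, d)) : M := (map_mx Num.conj A)^T.
Definition cadj (v : 'cV[C]_d) : 'rV[C]_d := (map_mx Num.conj v)^T.

Definition hermitian (A : M) : Prop := adjmx A = A.

Definition psd (A : M) : Prop :=
  hermitian A /\ forall v : 'cV[C]_d, 0 <= (cadj v *m A *m v) 0 0.
Definition posdef (A : M) : Prop :=
  hermitian A /\ forall v : 'cV[C]_d, v != 0 -> 0 < (cadj v *m A *m v) 0 0.

(* the positive semidefinite square root: a (the unique, when A is psd)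
   psd matrix S with S * S = A, chosen by classical choice *)
Definition sqrtm (A : M) : M :=
  epsilon (inhabits (0 : M)) (fun S : M => psd S /\ S *m S = A).

Definition gmean (A B : M) : M :=
  let rA := sqrtm A in let irA := invmx rA in
  rA *m sqrtm (irA *m B *m irA) *m rA.

Definition genFid (Rm P Q : M) : C :=
  let rR := sqrtm Rm in
  \tr (sqrtm (rR *m P *m rR) *m invmx Rm *m sqrtm (rR *m Q *m rR)).

Definition matsFid (P Q : M) : C := \tr (gmean P Q).

End MatrixDefs.

From Pilot Require Import Defs.
From Stdlib Require Import ClassicalEpsilon.
From mathcomp Require Import all_boot all_order all_algebra.
From mathcomp Require Import reals complex ring.
Set Implicit Arguments. Unset Strict Implicit. Unset Printing Implicit Defensive.
Import Order.TTheory GRing.Theory Num.Theory.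
Local Open Scope ring_scope.
Local Open Scope sesquilinear_scope.

(* With [r = R^{1/2}], the matrices [X = r P r] and [Y = r Q r] satisfy
   [(1-t) X + t Y = r R^{-1} r = 1], hence commute.  For such [R] both
   fidelities equal [Tr (r^{-1} X^{1/2} Y^{1/2} r^{-1})]: the generalized one
   by cyclicity of the trace, the Matsumoto one because the geometric mean,
   being the unique positive solution [Z] of the Riccati equation
   [Z A^{-1} Z = B], is covariant under congruence and equals
   [X^{1/2} Y^{1/2}] for commuting [X] and [Y]. *)

Section PositiveMatrices.
Variables (R : realType) (d : nat).
Local Notation C := (R[i]).
Local Notation M := ('M[C]_d).
Local Notation qf A v := ((v ^t* *m A *m v) 0 0).

Lemma adjmxE (A : M) : adjmx A = A ^t*.
Proof. by rewrite /adjmx map_trmx. Qed.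

Lemma cadjE (v : 'cV[C]_d) : cadj v = v ^t*.
Proof. by rewrite /cadj map_trmx. Qed.

Lemma psdE (A : M) : psd A <-> A ^t* = A /\ forall v : 'cV[C]_d, 0 <= qf A v.
Proof.
rewrite /psd /Defs.hermitian adjmxE.
split=> -[hA qA]; (split; [exact: hA | move=> v; have := qA v; rewrite cadjE; exact]).
Qed.

Lemma posdefE (A : M) :
  posdef A <-> A ^t* = A /\ forall v : 'cV[C]_d, v != 0 -> 0 < qf A v.
Proof.
rewrite /posdef /Defs.hermitian adjmxE.
split=> -[hA qA]; (split; [exact: hA | move=> v; have := qA v; rewrite cadjE; exact]).
Qed.

Lemma trmxCM m n p (A : 'M[C]_(m, n)) (B : 'M[C]_(n, p)) :
  (A *m B) ^t* = B ^t* *m A ^t*.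
Proof. by rewrite trmx_mul map_mxM. Qed.

Lemma trmxCV (A : M) : (invmx A) ^t* = invmx (A ^t*).
Proof. by rewrite trmx_inv map_invmx. Qed.

Lemma trmxC_invmx_herm (A : M) : A ^t* = A -> (invmx A) ^t* = invmx A.
Proof. by rewrite trmxCV => ->. Qed.

Lemma invmxM (A B : M) : A \in unitmx -> B \in unitmx ->
  invmx (A *m B) = invmx B *m invmx A.
Proof.
move=> uA uB; have uAB : A *m B \in unitmx by rewrite unitmx_mul uA.
have BAAB : invmx B *m invmx A *m (A *m B) = 1%:M.
  by rewrite mulmxA -(mulmxA _ (invmx A)) (mulVmx uA) mulmx1 (mulVmx uB).
by rewrite -[LHS]mul1mx -BAAB -mulmxA (mulmxV uAB) mulmx1.
Qed.

Lemma psd_herm (A : M) : psd A -> A ^t* = A.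
Proof. by case/psdE. Qed.

Lemma posdef_psd (A : M) : posdef A -> psd A.
Proof.
case/posdefE=> hA qA; apply/psdE; split=> // v.
have [->|v0] := eqVneq v 0; last exact: ltW (qA v v0).
by rewrite mulmx0 mxE.
Qed.

Lemma posdef_unit (A : M) : posdef A -> A \in unitmx.
Proof.
case/posdefE=> _ qA; rewrite unitmxE unitfE -det_tr.
apply/negP=> /det0P [w w0 wA].
have wT0 : w^T != 0 by rewrite trmx_eq0.
have AwT : A *m w^T = 0 by apply: trmx_inj; rewrite trmx_mul trmxK wA trmx0.
by have := qA _ wT0; rewrite -mulmxA AwT mulmx0 mxE ltxx.
Qed.

Lemma psd_congr (B S : M) : psd B -> psd (S ^t* *m B *m S).
Proof.
case/psdE=> hB qB; apply/psdE; split.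
  by rewrite !trmxCM trmxCK hB mulmxA.
by move=> v; have := qB (S *m v); rewrite trmxCM !mulmxA.
Qed.

Lemma psd_congr_herm (B S : M) : S ^t* = S -> psd B -> psd (S *m B *m S).
Proof. by move=> hS /(psd_congr S); rewrite hS. Qed.

Lemma psd_invmx (A : M) : posdef A -> psd (invmx A).
Proof.
move=> hA; have uA := posdef_unit hA.
have hiA := trmxC_invmx_herm (psd_herm (posdef_psd hA)).
have := psd_congr_herm hiA (posdef_psd hA).
by rewrite (mulVmx uA) mul1mx.
Qed.

Lemma quad_combination (a b : C) (A B : M) (v : 'cV[C]_d) :
  qf (a *: A + b *: B) v = a * qf A v + b * qf B v.
Proof. by rewrite mulmxDr -!scalemxAr mulmxDl -!scalemxAl !mxE. Qed.

Lemma posdef_convex (a b : C) (A B : M) : 0 <= a -> 0 <= b -> 0 < a + b ->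
  posdef A -> posdef B -> posdef (a *: A + b *: B).
Proof.
move=> a0 b0 ab0 /posdefE[hA qA] /posdefE[hB qB]; apply/posdefE; split.
  rewrite linearD !linearZ /= map_mxD !map_mxZ hA hB.
  by congr (_ *: _ + _ *: _); apply: geC0_conj.
move=> v v0; rewrite quad_combination.
have [b_eq0|bn0] := eqVneq b 0.
  by move: ab0; rewrite b_eq0 mul0r !addr0 => a_gt0; apply: mulr_gt0 a_gt0 (qA v v0).
have b_gt0 : 0 < b by rewrite lt_def bn0.
exact: ltr_wpDl (mulr_ge0 a0 (ltW (qA v v0))) (mulr_gt0 b_gt0 (qB v v0)).
Qed.

Lemma quad_diag (s : 'rV[C]_d) (y : 'cV[C]_d) :
  qf (diag_mx s) y = \sum_i s 0 i * (y i 0 * (y i 0)^*).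
Proof. by rewrite mul_mx_diag mxE; apply: eq_bigr => i _; rewrite !mxE; ring. Qed.

Lemma psd_diag (s : 'rV[C]_d) : (forall i, 0 <= s 0 i) -> psd (diag_mx s).
Proof.
move=> s0; apply/psdE; split.
  by rewrite tr_diag_mx map_diag_mx; congr diag_mx; apply/rowP=> j; rewrite !mxE; apply: geC0_conj.
by move=> v; rewrite quad_diag; apply: sumr_ge0 => i _; rewrite mulr_ge0 ?mul_conjC_ge0.
Qed.

Lemma psd1 : psd (1%:M : M).
Proof.
have -> : (1%:M : M) = diag_mx (const_mx 1) by apply/matrixP=> i j; rewrite !mxE.
by apply: psd_diag => i; rewrite mxE ler01.
Qed.

Lemma psd_sq (S : M) : psd S -> psd (S *m S).
Proof. by move=> hS; have := psd_congr_herm (psd_herm hS) psd1; rewrite mulmx1. Qed.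

Lemma spectral_psd (A : M) : psd A -> exists U (s : 'rV[C]_d),
  [/\ U \is unitarymx, forall i, 0 <= s 0 i & A = U ^t* *m diag_mx s *m U].
Proof.
case/psdE=> hA qA.
have nA : A \is normalmx by apply/normalmxP; rewrite hA.
have uU := spectral_unitarymx A.
have eA : A = (spectralmx A) ^t* *m diag_mx (spectral_diag A) *m spectralmx A.
  by rewrite -(invmx_unitary uU); apply/orthomx_spectralP.
move: (spectralmx A) (spectral_diag A) uU eA => U s uU eA.
exists U, s; split=> // i; pose e : 'cV[C]_d := delta_mx i 0.
have := qA (U ^t* *m e).
rewrite trmxCM trmxCK eA !mulmxA !mulmxtVK // quad_diag.
rewrite (bigD1 i) //= big1 => [|j ji]; last by rewrite !mxE (negbTE ji) !mul0r mulr0.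
by rewrite !mxE eqxx conjC1 !mulr1 addr0.
Qed.

Lemma unitary_diag_sq (U : M) (s : 'rV[C]_d) : U \is unitarymx ->
  (U ^t* *m diag_mx s *m U) *m (U ^t* *m diag_mx s *m U) =
  U ^t* *m diag_mx (\row_j (s 0 j * s 0 j)) *m U.
Proof.
move=> uU; rewrite !mulmxA (mulmxtVK _ uU).
by rewrite -(mulmxA (U ^t*) (diag_mx s)) mulmx_diag.
Qed.

Lemma unitary_diag_sqrtC (U : M) (s : 'rV[C]_d) :
  U \is unitarymx -> (forall i, 0 <= s 0 i) ->
  psd (U ^t* *m diag_mx (\row_j sqrtC (s 0 j)) *m U) /\
  (U ^t* *m diag_mx (\row_j sqrtC (s 0 j)) *m U) *m
  (U ^t* *m diag_mx (\row_j sqrtC (s 0 j)) *m U) = U ^t* *m diag_mx s *m U.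
Proof.
move=> uU s0; split; first by apply: psd_congr; apply: psd_diag => i; rewrite mxE sqrtC_ge0.
rewrite (unitary_diag_sq (\row_j sqrtC (s 0 j)) uU).
suff -> : \row_j ((\row_j sqrtC (s 0 j)) 0 j * (\row_j sqrtC (s 0 j)) 0 j) = s by [].
by apply/rowP=> j; rewrite !mxE -expr2 sqrtCK.
Qed.

(* In the eigenbasis, [B' diag(s) = diag(s) B'] forces [B' i j = 0] whenever
   [s i <> s j], so [B'] also commutes with any [diag(g)] with [g] a function
   of [s]. *)
Lemma comm_unitary_diag (U B : M) (s g : 'rV[C]_d) : U \is unitarymx ->
  (forall i j, s 0 i = s 0 j -> g 0 i = g 0 j) ->
  B *m (U ^t* *m diag_mx s *m U) = (U ^t* *m diag_mx s *m U) *m B ->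
  B *m (U ^t* *m diag_mx g *m U) = (U ^t* *m diag_mx g *m U) *m B.
Proof.
move=> uU sg hB; pose B' := U *m B *m U ^t*.
have UU : U ^t* *m U = 1%:M by rewrite -[U ^t*]mul1mx mulmxKtV.
have UU' : U *m U ^t* = 1%:M by apply/unitarymxP.
have eB : B = U ^t* *m B' *m U by rewrite /B' !mulmxA UU mul1mx mulmxKtV.
have comm_s : B' *m diag_mx s = diag_mx s *m B'.
  have := congr1 (fun Z => U *m Z *m U ^t*) hB.
  by rewrite /B' /= !mulmxA UU' mul1mx !(mulmxtVK _ uU).
clearbody B'.
have comm_g : B' *m diag_mx g = diag_mx g *m B'.
  apply/matrixP=> i j; rewrite mul_mx_diag mul_diag_mx !mxE.
  have [sij|sij] := eqVneq (s 0 i) (s 0 j); first by rewrite (sg _ _ sij) mulrC.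
  suff -> : B' i j = 0 by rewrite mul0r mulr0.
  have /matrixP/(_ i j) := comm_s; rewrite mul_mx_diag mul_diag_mx !mxE => e.
  have : B' i j * (s 0 j - s 0 i) = 0 by rewrite mulrBr e mulrC subrr.
  by move/eqP; rewrite mulf_eq0 subr_eq0 [s 0 j == _]eq_sym (negbTE sij) orbF => /eqP.
by rewrite eB !mulmxA !(mulmxtVK _ uU) -(mulmxA (U ^t*) B') comm_g mulmxA.
Qed.

Lemma psd_quad0_ker (A : M) (w : 'cV[C]_d) : psd A -> qf A w = 0 -> A *m w = 0.
Proof.
move=> pA; have [U [s [uU s0 eA]]] := spectral_psd pA.
have -> : qf A w = qf (diag_mx s) (U *m w) by rewrite eA trmxCM !mulmxA.
rewrite quad_diag => q0.
suff sUw : diag_mx s *m (U *m w) = 0 by rewrite eA -!mulmxA sUw mulmx0.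
apply/matrixP=> i j; rewrite mul_diag_mx [LHS]mxE [RHS]mxE (ord1 j).
have /eqP := psumr_eq0P (fun k _ => mulr_ge0 (s0 k) (mul_conjC_ge0 _)) q0 (i := i) isT.
by rewrite mulf_eq0 mul_conjC_eq0 => /orP[]/eqP->; rewrite ?mul0r ?mulr0.
Qed.

Lemma herm_sq_eq0 (H : M) : H ^t* = H -> H *m H = 0 -> H = 0.
Proof.
move=> hH /matrixP HH; apply/matrixP=> i j; rewrite mxE.
have HC k : H k i = (H i k)^* by rewrite -{1}hH !mxE.
have : \sum_k H i k * (H i k)^* = 0.
  by have := HH i i; rewrite !mxE => HHii; rewrite -[RHS]HHii; apply: eq_bigr => k _; rewrite HC.
move/psumr_eq0P => /(_ (fun k _ => mul_conjC_ge0 _) j isT) /eqP.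
by rewrite mul_conjC_eq0 => /eqP.
Qed.

Lemma mx_eq0_mulmx m (B : 'M[C]_(m, d)) : (forall v : 'cV[C]_d, B *m v = 0) -> B = 0.
Proof.
move=> Bv; apply/matrixP=> i j.
by have /matrixP/(_ i 0) := Bv (delta_mx j 0); rewrite -colE !mxE.
Qed.

(* [T] commutes with [T^2 = S^2] and hence with [S]; then
   [(S + T)(S - T) = 0], and positivity of [S + T] kills [S - T]. *)
Lemma psd_sqrt_uniq (S T : M) : psd S -> psd T -> S *m S = T *m T -> S = T.
Proof.
move=> pS pT ST; have [U [s [uU s0 eS]]] := spectral_psd pS.
have TS : T *m S = S *m T.
  have T_comm : T *m (U ^t* *m diag_mx (\row_j (s 0 j * s 0 j)) *m U) =
      (U ^t* *m diag_mx (\row_j (s 0 j * s 0 j)) *m U) *m T.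
    by rewrite -unitary_diag_sq // -eS ST mulmxA.
  rewrite eS; apply: (comm_unitary_diag uU _ T_comm) => i j; rewrite !mxE => e.
  by apply/eqP; rewrite -(@eqrXn2 _ 2) ?s0 // !expr2 e.
have SpT_SmT : (S + T) *m (S - T) = 0.
  by rewrite mulmxDl !mulmxBr ST TS addrA subrK subrr.
apply/eqP; rewrite -subr_eq0; apply/eqP/herm_sq_eq0.
  by rewrite linearB /= map_mxB !psd_herm.
apply: mx_eq0_mulmx => v; set w := (S - T) *m v.
have : qf (S + T) w = 0.
  by rewrite /w -mulmxA (mulmxA (S + T)) SpT_SmT mul0mx mulmx0 mxE.
rewrite mulmxDr mulmxDl mxE => /eqP.
have [_ qS] := iffLR (psdE S) pS; have [_ qT] := iffLR (psdE T) pT.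
rewrite paddr_eq0 // => /andP[/eqP/(psd_quad0_ker pS) Sw /eqP/(psd_quad0_ker pT) Tw].
by rewrite -mulmxA mulmxBl Sw Tw subrr.
Qed.

Lemma sqrtm_spec (A : M) : psd A -> psd (sqrtm A) /\ sqrtm A *m sqrtm A = A.
Proof.
move=> pA; apply: (epsilon_spec (inhabits (0 : M)) (fun S => psd S /\ S *m S = A)).
have [U [s [uU s0 ->]]] := spectral_psd pA.
by eexists; apply: unitary_diag_sqrtC.
Qed.

Lemma sqrtm_psd (A : M) : psd A -> psd (sqrtm A).
Proof. by case/sqrtm_spec. Qed.

Lemma sqrtm_sq (A : M) : psd A -> sqrtm A *m sqrtm A = A.
Proof. by case/sqrtm_spec. Qed.

Lemma sqrtmE (A S : M) : psd S -> S *m S = A -> sqrtm A = S.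
Proof.
move=> pS SS; have pA : psd A by rewrite -SS; apply: psd_sq.
by apply: psd_sqrt_uniq; [exact: sqrtm_psd | exact: pS | rewrite sqrtm_sq].
Qed.

Lemma sqrtm_unit (A : M) : psd A -> A \in unitmx -> sqrtm A \in unitmx.
Proof. by move=> pA; rewrite -{1}(sqrtm_sq pA) unitmx_mul => /andP[]. Qed.

Lemma sqrtm_comm (A B : M) : psd A -> B *m A = A *m B ->
  B *m sqrtm A = sqrtm A *m B.
Proof.
move=> pA BA; have [U [s [uU s0 eA]]] := spectral_psd pA.
have [pS SS] := unitary_diag_sqrtC uU s0; rewrite -eA in SS.
rewrite (sqrtmE pS SS); apply: (comm_unitary_diag (s := s) uU); last by rewrite -eA.
by move=> i j; rewrite !mxE => ->.
Qed.

Lemma sqrtm_mul_comm (A B : M) : psd A -> psd B -> A *m B = B *m A ->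
  sqrtm A *m sqrtm B = sqrtm B *m sqrtm A.
Proof.
move=> pA pB AB; apply: sqrtm_comm pB _.
exact: esym (sqrtm_comm pA (esym AB)).
Qed.

Lemma psd_mul_comm (A B : M) : psd A -> psd B -> A *m B = B *m A -> psd (A *m B).
Proof.
move=> pA pB AB; rewrite -(sqrtm_sq pA) -mulmxA -(sqrtm_comm pA (esym AB)) mulmxA.
exact: psd_congr_herm (psd_herm (sqrtm_psd pA)) pB.
Qed.

(* [rewrite /gmean] would expose the canonical instances, on which
   the matrix lemmas used here do not match syntactically. *)
Lemma gmean_unfold (A B : M) :
  gmean A B = sqrtm A *m sqrtm (invmx (sqrtm A) *m B *m invmx (sqrtm A)) *m sqrtm A.
Proof. by []. Qed.

Lemma gmeanE (A B Z : M) : psd A -> A \in unitmx -> psd Z ->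
  Z *m invmx A *m Z = B -> gmean A B = Z.
Proof.
move=> pA uA pZ ZAZ; rewrite gmean_unfold.
set a := sqrtm A; have ua : a \in unitmx by exact: sqrtm_unit.
have ha : (invmx a) ^t* = invmx a by apply/trmxC_invmx_herm/psd_herm/sqrtm_psd.
have iA : invmx a *m invmx a = invmx A by rewrite -invmxM // sqrtm_sq.
suff -> : sqrtm (invmx a *m B *m invmx a) = invmx a *m Z *m invmx a.
  by rewrite !mulmxA (mulmxV ua) mul1mx (mulmxKV ua).
apply: sqrtmE; first exact: psd_congr_herm.
by rewrite -ZAZ -iA !mulmxA.
Qed.

Lemma gmean_riccati (A B : M) : psd A -> A \in unitmx -> psd B ->
  psd (gmean A B) /\ gmean A B *m invmx A *m gmean A B = B.
Proof.
move=> pA uA pB; rewrite gmean_unfold.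
set a := sqrtm A; have ua : a \in unitmx by exact: sqrtm_unit.
have ha : a ^t* = a by apply/psd_herm/sqrtm_psd.
have hia : (invmx a) ^t* = invmx a by exact: trmxC_invmx_herm.
have pS : psd (invmx a *m B *m invmx a) by exact: psd_congr_herm.
split; first exact: psd_congr_herm ha (sqrtm_psd pS).
rewrite -[in invmx A](sqrtm_sq pA) -/a invmxM //.
rewrite !mulmxA (mulmxK ua) (mulmxKV ua) -(mulmxA a) sqrtm_sq //.
by rewrite !mulmxA (mulmxV ua) mul1mx (mulmxKV ua).
Qed.

Lemma gmean_congr (A B S : M) : S ^t* = S -> S \in unitmx ->
  psd A -> A \in unitmx -> psd B ->
  gmean (S *m A *m S) (S *m B *m S) = S *m gmean A B *m S.
Proof.
move=> hS uS pA uA pB; have [pG GAG] := gmean_riccati pA uA pB.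
move: (gmean A B) pG GAG => G pG GAG.
have uSA : S *m A \in unitmx by rewrite unitmx_mul uS uA.
apply: gmeanE; [exact: psd_congr_herm hS pA | by rewrite unitmx_mul uSA uS |
  exact: psd_congr_herm hS pG |].
rewrite (invmxM uSA uS) (invmxM uS uA) -[in RHS]GAG !mulmxA.
by rewrite -(mulmxA (S *m G)) (mulmxV uS) mulmx1 (mulmxKV uS).
Qed.

Lemma gmean_comm (A B : M) : psd A -> A \in unitmx -> psd B ->
  A *m B = B *m A -> gmean A B = sqrtm A *m sqrtm B.
Proof.
move=> pA uA pB AB; have ua := sqrtm_unit pA uA.
have ab := sqrtm_mul_comm pA pB AB.
apply: gmeanE => //; first exact: psd_mul_comm (sqrtm_psd pA) (sqrtm_psd pB) ab.
rewrite -[in invmx A](sqrtm_sq pA) invmxM // {1}ab !mulmxA.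
by rewrite (mulmxK ua) (mulmxKV ua) sqrtm_sq.
Qed.

Lemma comm_of_combination_eq1 (a b : C) (X Y : M) :
  a + b = 1 -> a *: X + b *: Y = 1%:M -> X *m Y = Y *m X.
Proof.
move=> ab abXY; have [b0|bn0] := eqVneq b 0.
  have a1 : a = 1 by rewrite -ab b0 addr0.
  by move: abXY; rewrite a1 b0 scale0r addr0 scale1r => ->; rewrite mul1mx mulmx1.
apply: (scalerI bn0).
have : X *m (a *: X + b *: Y) = (a *: X + b *: Y) *m X by rewrite abXY mulmx1 mul1mx.
by rewrite mulmxDr mulmxDl -!scalemxAr -!scalemxAl => /addrI.
Qed.

Lemma genFid_matsFid_comm (Rm P Q : M) :
  psd Rm -> Rm \in unitmx -> psd P -> P \in unitmx -> psd Q ->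
  (sqrtm Rm *m P *m sqrtm Rm) *m (sqrtm Rm *m Q *m sqrtm Rm) =
  (sqrtm Rm *m Q *m sqrtm Rm) *m (sqrtm Rm *m P *m sqrtm Rm) ->
  genFid Rm P Q = matsFid P Q.
Proof.
move=> pR uR pP uP pQ; rewrite /genFid /matsFid.
have rr := sqrtm_sq pR; have ur := sqrtm_unit pR uR.
have hr : sqrtm Rm ^t* = sqrtm Rm by apply/psd_herm/sqrtm_psd.
set r := sqrtm Rm in rr ur hr *; set ir := invmx r.
have hir : ir ^t* = ir by exact: trmxC_invmx_herm.
set X := r *m P *m r; set Y := r *m Q *m r => XY.
have pX : psd X by exact: psd_congr_herm.
have pY : psd Y by exact: psd_congr_herm.
have uX : X \in unitmx by rewrite !unitmx_mul ur uP.
have r_cancel (A : M) : A = ir *m (r *m A *m r) *m ir.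
  by rewrite !mulmxA (mulVmx ur) mul1mx (mulmxK ur).
rewrite [P]r_cancel [Q]r_cancel -/X -/Y gmean_congr ?unitmx_inv //.
rewrite gmean_comm // -rr invmxM // -/ir mulmxA mxtrace_mulC !mulmxA.
by rewrite (sqrtm_mul_comm pY pX (esym XY)) [LHS]mxtrace_mulC !mulmxA.
Qed.

End PositiveMatrices.

Theorem mainTheorem12 (R : realType) (d : nat) (P Q : 'M[R[i]]_d) (t : R) :
  posdef P -> posdef Q -> 0 <= t <= 1 ->
  genFid (invmx ((1 - (t%:C)%C) *: P + (t%:C)%C *: Q)) P Q = matsFid P Q.
Proof.
move=> hP hQ /andP[t0 t1]; set M := _ + _.
have hM : posdef M.
  by apply: posdef_convex; rewrite ?subr_ge0 ?lecR ?subrK ?ltr01.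
have pR := psd_invmx hM; have uR : invmx M \in unitmx by rewrite unitmx_inv posdef_unit.
apply: genFid_matsFid_comm;
  [exact: pR | exact: uR | exact: posdef_psd | exact: posdef_unit | exact: posdef_psd |].
set r := sqrtm (invmx M); have ur : r \in unitmx by exact: sqrtm_unit.
have eM : M = invmx r *m invmx r by rewrite -invmxM // sqrtm_sq // invmxK.
apply: (comm_of_combination_eq1 (a := 1 - (t%:C)%C) (b := (t%:C)%C)); first exact: subrK.
have -> : (1 - (t%:C)%C) *: (r *m P *m r) + (t%:C)%C *: (r *m Q *m r) = r *m M *m r.
  by rewrite /M mulmxDr mulmxDl -!scalemxAr -!scalemxAl.
by rewrite eM !mulmxA (mulmxV ur) mul1mx (mulVmx ur).
Qed.
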